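(* Let $(X,\Sigma,\mu)$ be a measure space, $n,l\ge1$, $\mathbb{F}\in\{\mathbb{R},\mathbb{C}\}$, $(X_j)_{j\in[1,l]}$ a partition of $X$ into measurable subsets, $h\in L^2(X,\mu;\mathbb{F})$, and define $W:L^2(X,\mu;\mathbb{F}^n)\to\prod_{j\in[1,l]}\mathbb{F}^n$ by $W(F)=\big(\int_{X_j}h(x)f_x\,d\mu(x)\big)_{j\in[1,l]}$. Let $D\in\prod_{j\in[1,l]}\mathbb{F}^n$ be such that $W^{-1}(\{D\})$ contains a continuous frame. Then $\mathcal{F}^{\mathbb{F}}_{(X,\mu),n}\cap W^{-1}(\{D\})$ is dense in $W^{-1}(\{D\})$ (for the norm of $L^2(X,\mu;\mathbb{F}^n)$).
   Context: A family $\Phi=(\varphi_x)_{x\in X}$ in $\mathbb{F}^n$ (with measurable coordinates) is a continuous frame indexed by $(X,\mu)$ if there are $0<A\le B$ with $A\|v\|^2\le\int_X|\langle v,\varphi_x\rangle|^2d\mu(x)\le B\|v\|^2$ for all $v\in\mathbb{F}^n$. $\mathcal{F}^{\mathbb{F}}_{(X,\mu),n}$ denotes the set of such frames, viewed as a subset of $L^2(X,\mu;\mathbb{F}^n)$ (equivalently, the elements of $L^2(X,\mu;\mathbb{F}^n)$ whose coordinate functions are linearly independent in $L^2(X,\mu;\mathbb{F})$). *)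

From HB Require Import structures.
From mathcomp Require Import all_boot all_order all_algebra.
From mathcomp Require Import all_classical all_reals all_analysis.
From mathcomp Require Import complex.
Set Implicit Arguments. Unset Strict Implicit. Unset Printing Implicit Defensive.
Import Order.TTheory GRing.Theory Num.Theory.
Local Open Scope classical_set_scope.
Local Open Scope ring_scope.

(* Scalars of F are represented inside the complex numbers R[i].
   isC = true  : F = C (all of R[i]);
   isC = false : F = R (the elements of R[i] with zero imaginary part). *)

Section Defs.
Context {R : realType}.

Definition inF (isC : bool) (z : R[i]) : bool := isC || (complex.Im z == 0).

Definition Fvec (isC : bool) (n : nat) (v : 'I_n -> R[i]) : Prop :=
  forall i, inF isC (v i).

Definition csq (z : R[i]) : R := complex.Re z ^+ 2 + complex.Im z ^+ 2.

Definition vsq (n : nat) (v : 'I_n -> R[i]) : R := \sum_(i < n) csq (v i).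

Definition vdot (n : nat) (v w : 'I_n -> R[i]) : R[i] :=
  \sum_(i < n) v i * (w i)^*.

Context {d : measure_display} {T : measurableType d}.
Variable mu : {measure set T -> \bar R}.

Definition cmeas (g : T -> R[i]) : Prop :=
  measurable_fun setT (fun x => complex.Re (g x)) /\
  measurable_fun setT (fun x => complex.Im (g x)).

Definition L2F (isC : bool) (g : T -> R[i]) : Prop :=
  (forall x, inF isC (g x)) /\ cmeas g /\
  (\int[mu]_x (csq (g x))%:E < +oo)%E.

Definition L2Fn (isC : bool) (n : nat) (Phi : T -> 'I_n -> R[i]) : Prop :=
  forall i, L2F isC (fun x => Phi x i).

Definition is_cont_frame (isC : bool) (n : nat) (Phi : T -> 'I_n -> R[i]) : Prop :=
  (forall i, cmeas (fun x => Phi x i)) /\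
  exists A B : R, 0 < A /\ A <= B /\
    forall v : 'I_n -> R[i], Fvec isC v ->
      ((A * vsq v)%:E <= \int[mu]_x (csq (vdot v (Phi x)))%:E)%E /\
      (\int[mu]_x (csq (vdot v (Phi x)))%:E <= (B * vsq v)%:E)%E.

Definition cint (A : set T) (g : T -> R[i]) : R[i] :=
  Complex (Rintegral mu A (fun x => complex.Re (g x)))
          (Rintegral mu A (fun x => complex.Im (g x))).

Definition Wmap (l n : nat) (Xs : 'I_l -> set T) (h : T -> R[i])
  (Phi : T -> 'I_n -> R[i]) : 'I_l -> 'I_n -> R[i] :=
  fun j i => cint (Xs j) (fun x => h x * Phi x i).

Definition L2dist_sq (n : nat) (Phi Psi : T -> 'I_n -> R[i]) : \bar R :=
  \int[mu]_x (vsq (fun i => Phi x i - Psi x i))%:E.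

End Defs.

From HB Require Import structures.
From mathcomp Require Import all_boot all_order all_algebra.
From mathcomp Require Import all_classical all_reals all_analysis.
From mathcomp Require Import measurable_realfun.
From mathcomp Require Import complex.
From mathcomp Require Import ring lra.
Set Implicit Arguments. Unset Strict Implicit. Unset Printing Implicit Defensive.
Import Order.TTheory GRing.Theory Num.Theory.
Import numFieldNormedType.Exports.
Local Open Scope classical_set_scope.
Local Open Scope ring_scope.
Local Notation Re := complex.Re.
Local Notation Im := complex.Im.

(* Let Phi be in the fibre and Phi0 a continuous frame in it.  Since W is
   linear, every convex combination Psi_t = (1 - t) Phi + t Phi0 lies in the
   fibre, and its squared L^2 distance to Phi is t^2 ||Phi - Phi0||^2, so it
   suffices to find arbitrarily small t > 0 for which Psi_t is a frame.
   Identifying F^n with R^(2n), the frame operator of Psi_t is the real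
   quadratic form of the Gram matrix
        G(Psi_t) = (1-t)^2 G(Phi,Phi) + t(1-t) (G(Phi,Phi0) + G(Phi0,Phi))
                   + t^2 G(Phi0,Phi0),
   a positive semidefinite matrix whose entries are polynomials in t.  Its
   determinant is a polynomial which does not vanish at t = 1 (Phi0 is a
   frame), hence has a non-root in every interval (0, d); there the matrix is
   positive semidefinite and invertible, so by compactness of the unit sphere
   its quadratic form is bounded below: Psi_t is a frame. *)

Section QuadraticForms.
Context {R : realType}.

Definition qf m (M : 'M[R]_m) (u : 'rV[R]_m) : R := (u *m M *m u^T) 0 0.
Definition nsq m (u : 'rV[R]_m) : R := \sum_i u 0 i ^+ 2.

Lemma qf_sum m (M : 'M[R]_m) u :
  qf M u = \sum_q \sum_p (u 0 p * M p q * u 0 q).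
Proof.
rewrite /qf mxE; apply: eq_bigr => q _; rewrite !mxE big_distrl /=.
by apply: eq_bigr.
Qed.

Lemma nsq_ge0 m (u : 'rV[R]_m) : 0 <= nsq u.
Proof. by apply: sumr_ge0 => i _; rewrite sqr_ge0. Qed.

Lemma nsq_eq0 m (u : 'rV[R]_m) : nsq u = 0 -> u = 0.
Proof.
move=> h; apply/matrixP => i j; rewrite mxE (ord1 i).
have := psumr_eq0P (fun j _ => sqr_ge0 (u 0 j)) h (i:=j) isT.
by move/eqP; rewrite sqrf_eq0 => /eqP.
Qed.

Lemma nsqE m (u : 'rV[R]_m) : nsq u = (u *m u^T) 0 0.
Proof. by rewrite /nsq mxE; apply: eq_bigr => i _; rewrite !mxE expr2. Qed.

Lemma qfZ m (M : 'M[R]_m) k u : qf M (k *: u) = k ^+ 2 * qf M u.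
Proof.
rewrite /qf -scalemxAl linearZ /= -scalemxAl -scalemxAr scalerA mxE.
by rewrite expr2.
Qed.

Lemma nsqZ m k (u : 'rV[R]_m) : nsq (k *: u) = k ^+ 2 * nsq u.
Proof.
rewrite /nsq mulr_sumr; apply: eq_bigr => i _; rewrite mxE.
by rewrite exprMn.
Qed.

Lemma coord_sqr_le_nsq m (u : 'rV[R]_m) i : u 0 i ^+ 2 <= nsq u.
Proof.
rewrite /nsq (bigD1 i) //= lerDl; apply: sumr_ge0 => j _; exact: sqr_ge0.
Qed.

(* A vector isotropic for a symmetric positive semidefinite form lies in the
   kernel: expand qf M (u + s w) with w = u M and choose s < 0 suitably. *)
Lemma psd_isotropic_ker m (M : 'M[R]_m) u : M^T = M ->
  (forall v, 0 <= qf M v) -> qf M u = 0 -> u *m M = 0.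
Proof.
move=> sM psd q0; set w := u *m M.
have expand s : qf M (u + s *: w) = 2 * s * nsq w + s ^+ 2 * qf M w.
  rewrite /qf linearD /= linearZ /= !mulmxDl !mulmxDr.
  rewrite -!scalemxAr -!scalemxAl -?scalemxAr.
  have entryD (A B : 'M[R]_1) : (A + B) 0 0 = A 0 0 + B 0 0 by rewrite mxE.
  have entryZ k (A : 'M[R]_1) : (k *: A) 0 0 = k * A 0 0 by rewrite mxE.
  rewrite !entryD !entryZ.
  have -> : (u *m M *m w^T) 0 0 = nsq w by rewrite nsqE.
  have -> : (w *m M *m u^T) 0 0 = nsq w.
    have tr11 (x : 'M[R]_1) : x^T 0 0 = x 0 0 by rewrite mxE.
    by rewrite -tr11 !trmx_mul trmxK sM nsqE /w trmx_mul sM !mulmxA.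
  rewrite /qf in q0; rewrite q0; ring.
set a := nsq w; set b := qf M w.
have b0 : 0 <= b by apply: psd.
have a0 : 0 <= a by apply: nsq_ge0.
have := psd (u + (- a / (b + 1)) *: w); rewrite expand -/a -/b.
set s := - a / (b + 1).
have hs : s * (b + 1) = - a.
  by rewrite /s mulrAC -mulrA divff ?mulr1 // gt_eqF // ltr_wpDl.
move=> h; have : a = 0 by nra.
by move/nsq_eq0.
Qed.

Lemma continuous_sum m (I : Type) (s : seq I) (F : I -> 'rV[R]_m -> R) :
  (forall i, continuous (F i)) -> continuous (fun u => \sum_(i <- s) F i u).
Proof.
move=> hF; elim: s => [|i s IH].
  under eq_fun do rewrite big_nil; move=> x; exact: (@cst_continuous _ _ 0 x).
under eq_fun do rewrite big_cons.
by move=> x; exact: (continuousD (hF i x) (IH x)).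
Qed.

Lemma qf_continuous m (M : 'M[R]_m) : continuous (qf M).
Proof.
have -> : qf M = fun u => \sum_q \sum_p (u 0 p * M p q * u 0 q).
  by apply: funext => u; rewrite qf_sum.
apply: continuous_sum => q; apply: continuous_sum => p x.
exact: (continuousM (continuousM (@coord_continuous R 1 m 0 p x)
  (@cst_continuous _ _ (M p q) x)) (@coord_continuous R 1 m 0 q x)).
Qed.

Lemma nsq_continuous m : continuous (@nsq m).
Proof.
apply: continuous_sum => i x.
exact: (continuousM (@coord_continuous R 1 m 0 i x) (@coord_continuous R 1 m 0 i x)).
Qed.

(* The unit sphere of R^m (m > 0) is compact and nonempty, so every quadratic
   form attains its minimum on it. *)
Lemma qf_min_on_sphere m (M : 'M[R]_m) : (0 < m)%N ->
  exists2 c, nsq c = 1 & forall u, nsq u = 1 -> qf M c <= qf M u.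
Proof.
move=> m0; pose S := [set u : 'rV[R]_m | nsq u = 1].
have cS : closed S.
  exact: (continuous_closedP (@nsq m)).1 (@nsq_continuous m) _ (@closed_eq R 1).
have cB := @rV_compact _ m (fun _ => `[(-1 : R), 1]%classic)
  (fun _ => @segment_compact R (-1) 1).
have kS : compact S.
  apply: (subclosed_compact cS cB) => u /= Su i.
  have := coord_sqr_le_nsq u i; rewrite Su => h.
  have -> : (ord0 : 'I_1) = 0 by apply/val_inj.
  by rewrite in_itv /=; apply/andP; split; nra.
pose j := Ordinal m0.
have S0 : S !=set0.
  exists (delta_mx 0 j); rewrite /S /= /nsq (bigD1 j) //= big1.
    by rewrite !mxE !eqxx expr1n addr0.
  by move=> i /negbTE hij; rewrite mxE hij andbF expr0n.
have [c Sc minc] := EVT_min_rV S0 kS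
  (@continuous_subspaceT _ _ S _ (@qf_continuous m M)).
exists c; first by move: Sc; rewrite inE.
by move=> u Su; apply: minc; rewrite inE.
Qed.

(* A symmetric positive semidefinite invertible matrix is positive definite
   with a uniform bound a ||u||^2 <= qf M u: the minimum of qf M on the
   sphere cannot vanish, and both sides are 2-homogeneous. *)
Lemma psd_unit_coercive m (M : 'M[R]_m) : (0 < m)%N -> M^T = M ->
  (forall v, 0 <= qf M v) -> \det M != 0 ->
  exists2 a, 0 < a & forall u, a * nsq u <= qf M u.
Proof.
move=> m0 sM psd dM.
have [c c1 minc] := qf_min_on_sphere M m0.
exists (qf M c).
  rewrite lt_neqAle psd andbT; apply/negP => /eqP/esym q0.
  move/negP: dM; apply; apply/det0P; exists c; last exact: psd_isotropic_ker.
  apply/eqP => c0; move: c1; rewrite c0 /nsq big1 => [/esym/eqP|i _].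
    by rewrite oner_eq0.
  by rewrite mxE expr0n.
move=> u; have [u0|u0] := eqVneq (nsq u) 0; first by rewrite u0 mulr0 psd.
have nu : 0 < nsq u by rewrite lt_neqAle eq_sym u0 nsq_ge0.
set s := Num.sqrt (nsq u).
have s0 : 0 < s by rewrite sqrtr_gt0.
have ss : s ^+ 2 = nsq u by rewrite sqr_sqrtr // nsq_ge0.
have := minc (s^-1 *: u); rewrite qfZ nsqZ exprVn -ss mulVf ?expf_neq0 ?gt_eqF //.
move=> /(_ erefl) h; have := ler_wpM2l (ltW nu) h.
rewrite -ss mulrA mulrV ?mul1r; first by rewrite mulrC.
by rewrite unitfE expf_neq0 // gt_eqF.
Qed.

(* A nonzero polynomial has a non-root in every interval (0, d): among the
   size p distinct points d/2, d/3, ... one is not a root. *)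
Lemma poly_nonroot_near0 (p : {poly R}) d : p != 0 -> 0 < d ->
  exists t, 0 < t < d /\ p.[t] != 0.
Proof.
move=> p0 d0.
pose rs := [seq d / (k.+2)%:R | k <- iota 0 (size p)].
have : ~~ all (root p) rs.
  apply/negP => hall; have := max_poly_roots p0 hall.
  have -> : uniq rs.
    rewrite map_inj_uniq ?iota_uniq // => a b /(mulfI (negbT (gt_eqF d0))) /invr_inj.
    by move/eqP; rewrite eqr_nat => /eqP [].
  by rewrite size_map size_iota ltnn => /(_ isT).
case/allPn => t /mapP [k _ ->] nr; exists (d / (k.+2)%:R); split => //.
apply/andP; split; first by rewrite divr_gt0 // ltr0n.
by rewrite ltr_pdivrMr ?ltr0n // ltr_pMr // ltr1n.
Qed.

Lemma qf_bounded m (M : 'M[R]_m) : exists b, 0 <= b /\ forall u, qf M u <= b * nsq u.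
Proof.
exists (\sum_q \sum_p `|M p q|); split.
  by apply: sumr_ge0 => q _; apply: sumr_ge0 => p _.
move=> u; rewrite qf_sum mulr_suml; apply: ler_sum => q _.
rewrite mulr_suml; apply: ler_sum => p _.
have hp := coord_sqr_le_nsq u p; have hq := coord_sqr_le_nsq u q.
set x := u 0 p in hp *; set y := u 0 q in hq *; set N := nsq u in hp hq *.
have h1 : x * y <= N by nra.
have h2 : - (x * y) <= N by nra.
have [k0|k0] := lerP 0 (M p q); first by rewrite ger0_norm //; nra.
by rewrite ltr0_norm //; nra.
Qed.

Definition pencil m (A B C : 'M[R]_m) (t : R) : 'M[R]_m :=
  (1 - t) ^+ 2 *: A + (t * (1 - t)) *: B + t ^+ 2 *: C.

(* If a symmetric pencil is positive semidefinite for every t and its end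
   point C is coercive, then it is coercive for some t arbitrarily close to 0:
   det (pencil t) is a polynomial in t which is nonzero at t = 1. *)
Lemma pencil_coercive_near0 m (A B C : 'M[R]_m) a0 : (0 < m)%N ->
  A^T = A -> B^T = B -> C^T = C ->
  (forall t u, 0 <= qf (pencil A B C t) u) ->
  0 < a0 -> (forall u, a0 * nsq u <= qf C u) ->
  forall d, 0 < d -> exists t, (0 < t < d) /\
    exists2 a, 0 < a & forall u, a * nsq u <= qf (pencil A B C t) u.
Proof.
move=> m0 sA sB sC psd a00 hC d d0.
pose P : 'M[{poly R}]_m := \matrix_(p, q) ((1 - 'X) ^+ 2 * (A p q)%:P +
   ('X * (1 - 'X)) * (B p q)%:P + 'X ^+ 2 * (C p q)%:P).
have detP t : (\det P).[t] = \det (pencil A B C t).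
  have -> : pencil A B C t = map_mx (horner_eval t) P.
    by apply/matrixP => p q; rewrite !mxE /horner_eval !hornerE.
  by rewrite det_map_mx.
have detC : \det C != 0.
  apply/negP => /det0P [v v0 vC].
  have q0 : qf C v = 0 by rewrite /qf vC mul0mx mxE.
  have := hC v; rewrite q0 pmulr_rle0 // => hv.
  by move/negP: v0; apply; apply/eqP/nsq_eq0/eqP; rewrite eq_le hv nsq_ge0.
have pencil1 : pencil A B C 1 = C.
  by rewrite /pencil subrr expr0n /= !scale0r mulr0 scale0r !add0r expr1n scale1r.
have P0 : \det P != 0.
  by apply/eqP => P0; move: detC; rewrite -pencil1 -detP P0 horner0 eqxx.
have [t [td tP]] := poly_nonroot_near0 P0 d0.
exists t; split => //; apply: psd_unit_coercive => //; last by rewrite -detP.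
by rewrite /pencil !linearD /= !linearZ /= sA sB sC.
Qed.

End QuadraticForms.

Ltac cx := repeat match goal with z : complex _ |- _ => destruct z end; simpl.

Section ComplexArith.
Context {R : realType}.
Implicit Types z w : R[i].

Lemma ReD z w : Re (z + w) = Re z + Re w. Proof. cx; ring. Qed.
Lemma ImD z w : Im (z + w) = Im z + Im w. Proof. cx; ring. Qed.
Lemma ReB z w : Re (z - w) = Re z - Re w. Proof. cx; ring. Qed.
Lemma ImB z w : Im (z - w) = Im z - Im w. Proof. cx; ring. Qed.
Lemma ReM z w : Re (z * w) = Re z * Re w - Im z * Im w. Proof. cx; ring. Qed.
Lemma ImM z w : Im (z * w) = Re z * Im w + Im z * Re w. Proof. cx; ring. Qed.
Lemma ReJ z : Re (z^*) = Re z. Proof. by cx. Qed.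
Lemma ImJ z : Im (z^*) = - Im z. Proof. by cx. Qed.
Lemma ReC (r : R) : Re ((r%:C)%C) = r. Proof. by []. Qed.
Lemma ImC (r : R) : Im ((r%:C)%C) = 0. Proof. by []. Qed.

Lemma Re_sum (I : Type) (s : seq I) (F : I -> R[i]) :
  Re (\sum_(i <- s) F i) = \sum_(i <- s) Re (F i).
Proof. by elim: s => [|i s IH]; rewrite ?big_nil ?big_cons ?ReD ?IH. Qed.
Lemma Im_sum (I : Type) (s : seq I) (F : I -> R[i]) :
  Im (\sum_(i <- s) F i) = \sum_(i <- s) Im (F i).
Proof. by elim: s => [|i s IH]; rewrite ?big_nil ?big_cons ?ImD ?IH. Qed.

Lemma ReCx (a b : R) : Re (Complex a b) = a. Proof. by []. Qed.
Lemma ImCx (a b : R) : Im (Complex a b) = b. Proof. by []. Qed.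

Lemma cx_eq z w : Re z = Re w -> Im z = Im w -> z = w.
Proof. by cx => -> ->. Qed.

Definition imul z : R[i] := Complex (- Im z) (Re z).
Lemma Reimul z : Re (imul z) = - Im z. Proof. by []. Qed.
Lemma Imimul z : Im (imul z) = Re z. Proof. by []. Qed.

Lemma csq_imul z : csq (imul z) = csq z.
Proof. by rewrite /csq Reimul Imimul sqrrN addrC. Qed.

(* The real inner product of C = R^2: rdot z w = Re (z w^* ). *)
Definition rdot z w : R := Re z * Re w + Im z * Im w.

Lemma csq_rdot z : csq z = rdot z z. Proof. by rewrite /csq /rdot !expr2. Qed.
Lemma csq_ge0 z : 0 <= csq z. Proof. by rewrite /csq addr_ge0 // sqr_ge0. Qed.
Lemma rdotC z w : rdot z w = rdot w z.
Proof. by rewrite /rdot mulrC [Im z * _]mulrC. Qed.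

Lemma rdot_bound z w : `|rdot z w| <= csq z + csq w.
Proof.
rewrite /rdot /csq ler_norml.
set a := Re z; set b := Im z; set c := Re w; set e := Im w.
have h1 := sqr_ge0 (a + c); have h2 := sqr_ge0 (a - c).
have h3 := sqr_ge0 (b + e); have h4 := sqr_ge0 (b - e).
rewrite !expr2 in h1 h2 h3 h4 *.
by apply/andP; split; nra.
Qed.

Lemma csqM z w : csq (z * w) = csq z * csq w.
Proof. by rewrite /csq ReM ImM; ring. Qed.
Lemma csqJ z : csq (z^*) = csq z.
Proof. by rewrite /csq ReJ ImJ sqrrN. Qed.
Lemma csqD_le z w : csq (z + w) <= 2 * csq z + 2 * csq w.
Proof.
rewrite /csq ReD ImD; set a := Re z; set b := Im z; set c := Re w; set e := Im w.
have h2 := sqr_ge0 (a - c); have h4 := sqr_ge0 (b - e).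
rewrite !expr2 in h2 h4 *; nra.
Qed.

Lemma rdotDl z1 z2 w : rdot (z1 + z2) w = rdot z1 w + rdot z2 w.
Proof. by rewrite /rdot ReD ImD; ring. Qed.
Lemma rdotZl (r : R) z w : rdot ((r%:C)%C * z) w = r * rdot z w.
Proof. by rewrite /rdot ReM ImM ReC ImC; ring. Qed.
Lemma rdot_suml (I : Type) (s : seq I) (F : I -> R[i]) w :
  rdot (\sum_(i <- s) F i) w = \sum_(i <- s) rdot (F i) w.
Proof.
elim: s => [|i s IH]; rewrite ?big_nil ?big_cons ?rdotDl ?IH //.
by rewrite /rdot; ring.
Qed.
Lemma rdot_sumr (I : Type) (s : seq I) (F : I -> R[i]) w :
  rdot w (\sum_(i <- s) F i) = \sum_(i <- s) rdot w (F i).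
Proof. by rewrite rdotC rdot_suml; apply: eq_bigr => i _; rewrite rdotC. Qed.

Lemma Re_rdot z w : Re (z * w) = rdot z (w^*).
Proof. by rewrite /rdot ReM ReJ ImJ; ring. Qed.
Lemma Im_rdot z w : Im (z * w) = rdot z (imul (w^*)).
Proof. by rewrite /rdot ImM Reimul Imimul ReJ ImJ; ring. Qed.

End ComplexArith.

Ltac cx_ring := apply: cx_eq;
  rewrite ?(ReD, ImD, ReB, ImB, ReM, ImM, ReJ, ImJ, ReC, ImC, Reimul, Imimul);
  rewrite ?(ReCx, ImCx); ring.

Section SquareIntegrable.
Context {R : realType} {d : measure_display} {T : measurableType d}.
Variable mu : {measure set T -> \bar R}.
Implicit Types f g : T -> R[i].

Definition intR (F : T -> R) := mu.-integrable setT (EFin \o F).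

Definition L2c g := cmeas g /\ intR (fun x => csq (g x)).

Lemma cmeasD f g : cmeas f -> cmeas g -> cmeas (fun x => f x + g x).
Proof.
move=> [rf if_] [rg ig]; split.
  by under eq_fun do rewrite ReD; exact: measurable_funD.
by under eq_fun do rewrite ImD; exact: measurable_funD.
Qed.

Lemma cmeasM f g : cmeas f -> cmeas g -> cmeas (fun x => f x * g x).
Proof.
move=> [rf if_] [rg ig]; split.
  by under eq_fun do rewrite ReM; apply: measurable_funB; apply: measurable_funM.
by under eq_fun do rewrite ImM; apply: measurable_funD; apply: measurable_funM.
Qed.

Lemma cmeasC (a : R[i]) : cmeas (fun _ : T => a).
Proof. by split; exact: measurable_cst. Qed.

Lemma cmeasJ f : cmeas f -> cmeas (fun x => (f x)^*).
Proof.
move=> [rf if_]; split; first by under eq_fun do rewrite ReJ.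
by under eq_fun do rewrite ImJ; exact: measurable_funN.
Qed.

Lemma csq_meas f : cmeas f -> measurable_fun setT (fun x => csq (f x)).
Proof.
by move=> [rf if_]; apply: measurable_funD; under eq_fun do rewrite expr2;
  apply: measurable_funM.
Qed.

Lemma rdot_meas f g : cmeas f -> cmeas g ->
  measurable_fun setT (fun x => rdot (f x) (g x)).
Proof.
by move=> [rf if_] [rg ig]; apply: measurable_funD; apply: measurable_funM.
Qed.

Lemma intR_le (F G : T -> R) : measurable_fun setT F ->
  (forall x, `|F x| <= `|G x|) -> intR G -> intR F.
Proof.
move=> mF hle iG; apply: (le_integrable _ _ _ iG) => //.
  exact/measurable_EFinP.
by move=> x _ /=; rewrite lee_fin.
Qed.

Lemma intRD (F G : T -> R) : intR F -> intR G -> intR (fun x => F x + G x).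
Proof.
move=> iF iG.
apply: (@eq_integrable _ _ _ mu setT measurableT ((EFin \o F) \+ (EFin \o G))%E).
  by move=> x _; rewrite /= EFinD.
exact: integrableD.
Qed.

Lemma intRZ (F : T -> R) k : intR F -> intR (fun x => k * F x).
Proof.
move=> iF.
apply: (@eq_integrable _ _ _ mu setT measurableT (fun x => k%:E * (EFin \o F) x)%E).
  by move=> x _; rewrite /= EFinM.
exact: integrableZl.
Qed.

Lemma intR0 : intR (fun _ => 0).
Proof.
by apply: (@eq_integrable _ _ _ mu setT measurableT (cst 0%E)) => //;
  exact: integrable0.
Qed.

Lemma intR_sum (I : Type) (s : seq I) (F : I -> T -> R) :
  (forall i, intR (F i)) -> intR (fun x => \sum_(i <- s) F i x).
Proof.
move=> hF; elim: s => [|i s IH].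
  by under eq_fun do rewrite big_nil; exact: intR0.
by under eq_fun do rewrite big_cons; exact: intRD.
Qed.

Lemma Rintegral_sum (I : Type) (s : seq I) (F : I -> T -> R) :
  (forall i, intR (F i)) ->
  Rintegral mu setT (fun x => \sum_(i <- s) F i x) =
  \sum_(i <- s) Rintegral mu setT (F i).
Proof.
move=> hF; elim: s => [|i s IH].
  under eq_Rintegral do rewrite big_nil.
  by rewrite big_nil Rintegral_cst // mul0r.
under eq_Rintegral do rewrite big_cons.
rewrite RintegralD //; [by rewrite IH big_cons | exact: hF | exact: intR_sum].
Qed.

Lemma intR_integral (F : T -> R) : intR F ->
  (\int[mu]_x (F x)%:E)%E = (Rintegral mu setT F)%:E.
Proof. by move=> iF; rewrite /Rintegral fineK // integrable_fin_num. Qed.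

Lemma L2cD f g : L2c f -> L2c g -> L2c (fun x => f x + g x).
Proof.
move=> [mf iF] [mg iG]; split; first exact: cmeasD.
apply: (@intR_le _ (fun x => 2 * csq (f x) + 2 * csq (g x))).
- by apply: csq_meas; exact: cmeasD.
- move=> x; rewrite !ger0_norm ?csqD_le ?csq_ge0 //.
  by rewrite addr_ge0 // mulr_ge0 ?csq_ge0.
- by apply: intRD; apply: intRZ.
Qed.

Lemma L2cMl (a : R[i]) f : L2c f -> L2c (fun x => a * f x).
Proof.
move=> [mf iF]; split; first by apply: cmeasM => //; exact: cmeasC.
by under eq_fun do rewrite csqM; exact: intRZ.
Qed.

Lemma L2cB f g : L2c f -> L2c g -> L2c (fun x => f x - g x).
Proof.
move=> hf hg; have := L2cD hf (L2cMl (-1) hg).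
by under eq_fun do rewrite mulN1r.
Qed.

Lemma L2cJ f : L2c f -> L2c (fun x => (f x)^*).
Proof.
move=> [mf iF]; split; first exact: cmeasJ.
by under eq_fun do rewrite csqJ.
Qed.

Lemma L2c_imul f : L2c f -> L2c (fun x => imul (f x)).
Proof.
move=> [[rf if_] iF]; split; first by split => //; exact: measurable_funN.
by under eq_fun do rewrite csq_imul.
Qed.

Lemma L2c_sum (I : Type) (s : seq I) (F : I -> T -> R[i]) :
  (forall i, L2c (F i)) -> L2c (fun x => \sum_(i <- s) F i x).
Proof.
move=> hF; elim: s => [|i s IH]; last first.
  by under eq_fun do rewrite big_cons; exact: L2cD.
under eq_fun do rewrite big_nil; split; first exact: cmeasC.
have -> : (fun _ : T => csq (0 : R[i])) = (fun _ => 0).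
  by apply: funext => x; rewrite /csq /= expr0n /= addr0.
exact: intR0.
Qed.

Lemma intR_rdot f g : L2c f -> L2c g -> intR (fun x => rdot (f x) (g x)).
Proof.
move=> [mf iF] [mg iG].
apply: (@intR_le _ (fun x => csq (f x) + csq (g x))); [exact: rdot_meas | | exact: intRD].
by move=> x; rewrite [X in _ <= X]ger0_norm ?rdot_bound // addr_ge0 ?csq_ge0.
Qed.

Definition l2dot f g := Rintegral mu setT (fun x => rdot (f x) (g x)).

Lemma l2dotC f g : l2dot f g = l2dot g f.
Proof. by rewrite /l2dot; under eq_Rintegral do rewrite rdotC. Qed.

Lemma l2dot_linl f1 f2 g (r s : R) : L2c f1 -> L2c f2 -> L2c g ->
  l2dot (fun x => (r%:C)%C * f1 x + (s%:C)%C * f2 x) g =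
  r * l2dot f1 g + s * l2dot f2 g.
Proof.
move=> h1 h2 hg; rewrite /l2dot.
under eq_Rintegral do rewrite rdotDl !rdotZl.
rewrite RintegralD //; try by apply: intRZ; exact: intR_rdot.
by rewrite !RintegralZl //; exact: intR_rdot.
Qed.

Lemma l2dot_linr f g1 g2 (r s : R) : L2c f -> L2c g1 -> L2c g2 ->
  l2dot f (fun x => (r%:C)%C * g1 x + (s%:C)%C * g2 x) =
  r * l2dot f g1 + s * l2dot f g2.
Proof.
by move=> hf h1 h2; rewrite l2dotC l2dot_linl // (l2dotC g1) (l2dotC g2).
Qed.

Lemma l2norm_comb m (u : 'rV[R]_m) (G : 'I_m -> T -> R[i]) :
  (forall p, L2c (G p)) ->
  l2dot (fun x => \sum_p (u 0 p)%:C%C * G p x) (fun x => \sum_p (u 0 p)%:C%C * G p x)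
  = \sum_q \sum_p (u 0 p * l2dot (G p) (G q) * u 0 q).
Proof.
move=> hG; rewrite /l2dot.
have iG p q : intR (fun x => u 0 q * (u 0 p * rdot (G p x) (G q x))).
  by apply: intRZ; apply: intRZ; exact: intR_rdot.
have expand x : rdot (\sum_p (u 0 p)%:C%C * G p x) (\sum_p (u 0 p)%:C%C * G p x)
   = \sum_q \sum_p (u 0 q * (u 0 p * rdot (G p x) (G q x))).
  rewrite rdot_sumr; apply: eq_bigr => q _.
  rewrite rdot_suml; apply: eq_bigr => p _.
  by rewrite rdotZl rdotC rdotZl rdotC; ring.
under eq_Rintegral do rewrite expand.
rewrite Rintegral_sum; last first.
  by move=> q; apply: intR_sum => p; exact: (iG p q).
apply: eq_bigr => q _; rewrite Rintegral_sum; last by move=> p; exact: (iG p q).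
apply: eq_bigr => p _; have ipq := intR_rdot (hG p) (hG q).
by rewrite (RintegralZl _ measurableT (intRZ _ ipq)) (RintegralZl _ measurableT ipq); ring.
Qed.

End SquareIntegrable.

(* F^n is identified with R^(2n): the row vector u stands for the complex
   vector with real parts u_(0..n-1) and imaginary parts u_(n..2n-1). *)
Section Realification.
Context {R : realType} (n : nat).

Definition cvec (u : 'rV[R]_(n + n)) : 'I_n -> R[i] :=
  fun i => Complex (u 0 (lshift n i)) (u 0 (rshift n i)).

(* The real coordinates of w -> <v, w>: vdot (cvec u) w = sum_p u_p c_p(w). *)
Definition realif_coef (w : 'I_n -> R[i]) (p : 'I_(n + n)) : R[i] :=
  match fintype.split p with inl i => (w i)^* | inr i => imul ((w i)^*) end.

Lemma split_lshift (i : 'I_n) : fintype.split (lshift n i) = inl i.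
Proof. exact: (unsplitK (inl i)). Qed.
Lemma split_rshift (i : 'I_n) : fintype.split (rshift n i) = inr i.
Proof. exact: (unsplitK (inr i)). Qed.

Lemma vdot_cvec u w : vdot (cvec u) w = \sum_p (u 0 p)%:C%C * realif_coef w p.
Proof.
have split_mul (a b : R) z : Complex a b * z^* = (a%:C)%C * z^* + (b%:C)%C * imul (z^*).
  by cx_ring.
rewrite /vdot big_split_ord /= -big_split /=; apply: eq_bigr => i _.
by rewrite /realif_coef split_lshift split_rshift /cvec split_mul.
Qed.

Lemma vsq_cvec u : vsq (cvec u) = nsq u.
Proof.
rewrite /vsq /nsq big_split_ord /= -big_split /=; apply: eq_bigr => i _.
by rewrite /csq /cvec.
Qed.

Lemma cvec_surj (v : 'I_n -> R[i]) : exists u, cvec u = v.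
Proof.
exists (\row_p match fintype.split p with inl i => Re (v i) | inr i => Im (v i) end).
by apply: funext => i; rewrite /cvec !mxE split_lshift split_rshift; case: (v i).
Qed.

End Realification.

Section GramMatrix.
Context {R : realType} {d : measure_display} {T : measurableType d}.
Variable mu : {measure set T -> \bar R}.
Variable n : nat.
Implicit Types (psi phi : T -> 'I_n -> R[i]).

Definition L2cv psi := forall i, L2c mu (fun x => psi x i).

Definition realif_fun psi (p : 'I_(n + n)) : T -> R[i] :=
  fun x => realif_coef (psi x) p.
Definition gram psi phi : 'M[R]_(n + n) :=
  \matrix_(p, q) l2dot mu (realif_fun psi p) (realif_fun phi q).

Lemma realif_fun_L2c psi : L2cv psi -> forall p, L2c mu (realif_fun psi p).
Proof.
move=> h p; rewrite /realif_fun /realif_coef; case: (fintype.split p) => i.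
  exact: L2cJ.
by apply: L2c_imul; exact: L2cJ.
Qed.

Lemma L2c_vdot psi v : L2cv psi -> L2c mu (fun x => vdot v (psi x)).
Proof.
by move=> h; apply: L2c_sum => i; apply: L2cMl; exact: L2cJ.
Qed.

Lemma frame_form_gram psi : L2cv psi -> forall u,
  (\int[mu]_x (csq (vdot (cvec u) (psi x)))%:E)%E = (qf (gram psi psi) u)%:E.
Proof.
move=> h u.
have hG : L2c mu (fun x => \sum_p (u 0 p)%:C%C * realif_fun psi p x).
  by apply: L2c_sum => p; apply: L2cMl; exact: realif_fun_L2c.
under eq_integral => x _ do rewrite vdot_cvec.
rewrite (intR_integral hG.2); congr EFin.
under eq_Rintegral do rewrite csq_rdot.
have := l2norm_comb u (realif_fun_L2c h); rewrite /l2dot => ->; rewrite qf_sum.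
by apply: eq_bigr => q _; apply: eq_bigr => p _; rewrite mxE.
Qed.

Lemma gram_psd psi : L2cv psi -> forall u, 0 <= qf (gram psi psi) u.
Proof.
move=> h u; rewrite -lee_fin -frame_form_gram //.
by apply: integral_ge0 => x _; rewrite lee_fin csq_ge0.
Qed.

Lemma gram_tr psi phi : (gram psi phi)^T = gram phi psi.
Proof. by apply/matrixP => p q; rewrite !mxE l2dotC. Qed.

Definition interp phi phi0 (t : R) : T -> 'I_n -> R[i] :=
  fun x i => ((1 - t)%:C)%C * phi x i + (t%:C)%C * phi0 x i.

Lemma L2cv_interp phi phi0 t : L2cv phi -> L2cv phi0 -> L2cv (interp phi phi0 t).
Proof. by move=> h h0 i; apply: L2cD; apply: L2cMl. Qed.

Lemma gram_interp phi phi0 t : L2cv phi -> L2cv phi0 ->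
  gram (interp phi phi0 t) (interp phi phi0 t) =
  pencil (gram phi phi) (gram phi phi0 + gram phi0 phi) (gram phi0 phi0) t.
Proof.
move=> h h0; apply/matrixP => p q; rewrite !mxE.
have L1 := realif_fun_L2c h; have L0 := realif_fun_L2c h0.
have comb r x : realif_fun (interp phi phi0 t) r x =
    ((1 - t)%:C)%C * realif_fun phi r x + (t%:C)%C * realif_fun phi0 r x.
  by rewrite /realif_fun /realif_coef /interp; case: (fintype.split r) => i;
    cx_ring.
rewrite (funext (comb p)) (funext (comb q)).
rewrite l2dot_linl //; last by apply: L2cD; apply: L2cMl.
by rewrite !l2dot_linr //; ring.
Qed.

End GramMatrix.

Section Frames.
Context {R : realType} {d : measure_display} {T : measurableType d}.
Variable mu : {measure set T -> \bar R}.
Variable n : nat.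
Implicit Types (psi phi : T -> 'I_n -> R[i]) (f g : T -> R[i]).

Lemma L2F_L2c isC g : L2F mu isC g -> L2c mu g.
Proof.
move=> [_ [mg fin]]; split => //; apply/integrableP; split.
  by apply/measurable_EFinP; exact: csq_meas.
rewrite (eq_integral (fun x => (csq (g x))%:E)) //.
by move=> x _; rewrite /= ger0_norm // csq_ge0.
Qed.

Lemma L2Fn_L2cv isC psi : L2Fn mu isC psi -> L2cv mu psi.
Proof. by move=> h i; exact: L2F_L2c (h i). Qed.

Lemma L2Fn_interp isC phi phi0 t :
  L2Fn mu isC phi -> L2Fn mu isC phi0 -> L2Fn mu isC (interp phi phi0 t).
Proof.
move=> h h0 i; have [mi ii] := L2cv_interp t (L2Fn_L2cv h) (L2Fn_L2cv h0) i.
split; last by split => //; rewrite (intR_integral ii) ltry.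
move=> x; rewrite /inF /interp; case: isC h h0 => //= h h0.
move: (h i).1 (h0 i).1 => /(_ x) /eqP e1 /(_ x) /eqP e0.
by rewrite ImD !ImM e1 e0 !ReC !ImC; apply/eqP; ring.
Qed.

(* For real w the frame form splits along the real and imaginary parts of v,
   so lower frame bounds for real vectors extend to complex ones. *)
Lemma csq_vdot_real (v w : 'I_n -> R[i]) : (forall i, Im (w i) = 0) ->
  csq (vdot v w) = csq (vdot (fun i => (Re (v i))%:C%C) w) +
                   csq (vdot (fun i => (Im (v i))%:C%C) w).
Proof.
move=> hw; rewrite /csq /vdot !Re_sum !Im_sum.
have e1 : \sum_i Re (v i * (w i)^*) = \sum_i Re (v i) * Re (w i).
  by apply: eq_bigr => i _; rewrite ReM ReJ ImJ hw; ring.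
have e2 : \sum_i Im (v i * (w i)^*) = \sum_i Im (v i) * Re (w i).
  by apply: eq_bigr => i _; rewrite ImM ReJ ImJ hw; ring.
have e3 : \sum_i Re ((Re (v i))%:C%C * (w i)^*) = \sum_i Re (v i) * Re (w i).
  by apply: eq_bigr => i _; rewrite ReM ReJ ImJ ReC ImC; ring.
have e4 : \sum_i Im ((Re (v i))%:C%C * (w i)^*) = 0.
  by apply: big1 => i _; rewrite ImM ReJ ImJ ReC ImC hw; ring.
have e5 : \sum_i Re ((Im (v i))%:C%C * (w i)^*) = \sum_i Im (v i) * Re (w i).
  by apply: eq_bigr => i _; rewrite ReM ReJ ImJ ReC ImC; ring.
have e6 : \sum_i Im ((Im (v i))%:C%C * (w i)^*) = 0.
  by apply: big1 => i _; rewrite ImM ReJ ImJ ReC ImC hw; ring.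
by rewrite e1 e2 e3 e4 e5 e6 expr0n /= !addr0.
Qed.

Lemma vsq_split (v : 'I_n -> R[i]) :
  vsq v = vsq (fun i => (Re (v i))%:C%C) + vsq (fun i => (Im (v i))%:C%C).
Proof.
rewrite /vsq -big_split; apply: eq_bigr => i _.
by rewrite /csq !ReC !ImC /= expr0n /= !addr0.
Qed.

(* The lower frame bound of a frame makes its Gram matrix coercive, also
   when F = R (where the bound is only assumed for real vectors). *)
Lemma frame_gram_coercive isC phi0 : L2Fn mu isC phi0 ->
  is_cont_frame mu isC phi0 ->
  exists2 a, 0 < a & forall u, a * nsq u <= qf (gram mu phi0 phi0) u.
Proof.
move=> hL [_ [A [B [A0 [_ hAB]]]]]; exists A => // u.
rewrite -lee_fin -frame_form_gram -?vsq_cvec; last exact: L2Fn_L2cv hL.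
set v := cvec u; case: isC hL hAB => hL hAB; first exact: (hAB v (fun i => isT)).1.
have hw x i : Im (phi0 x i) = 0 by move: ((hL i).1 x); rewrite /inF /= => /eqP.
set vr := (fun i => (Re (v i))%:C%C); set vi := (fun i => (Im (v i))%:C%C).
under eq_integral => x _ do rewrite (csq_vdot_real v (hw x)) EFinD.
rewrite ge0_integralD //; last 4 first.
- by move=> x _; rewrite lee_fin csq_ge0.
- apply/measurable_EFinP; apply: csq_meas.
  exact: (L2c_vdot vr (L2Fn_L2cv hL)).1.
- by move=> x _; rewrite lee_fin csq_ge0.
- apply/measurable_EFinP; apply: csq_meas.
  exact: (L2c_vdot vi (L2Fn_L2cv hL)).1.
have Fr : Fvec false vr by move=> i; rewrite /inF /vr /=.
have Fi : Fvec false vi by move=> i; rewrite /inF /vi /=.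
by rewrite (vsq_split v) mulrDr EFinD; apply: leeD; [exact: (hAB vr Fr).1 |
  exact: (hAB vi Fi).1].
Qed.

(* Conversely a family whose Gram matrix is coercive is a continuous frame;
   the upper bound holds for every L^2 family. *)
Lemma frame_of_gram_coercive isC psi a : L2cv mu psi -> 0 < a ->
  (forall u, a * nsq u <= qf (gram mu psi psi) u) -> is_cont_frame mu isC psi.
Proof.
move=> h a0 ha; split; first by move=> i; exact: (h i).1.
have [b [b0 hb]] := qf_bounded (gram mu psi psi).
exists a, (a + b); split => //; split; first by rewrite lerDl.
move=> v _; have [u <-] := cvec_surj v.
rewrite frame_form_gram // vsq_cvec !lee_fin; split; first exact: ha.
apply: (le_trans (hb u)); rewrite mulrDl lerDr.
by rewrite mulr_ge0 ?nsq_ge0 // ltW.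
Qed.

Lemma interp_frame_near0 isC phi phi0 : L2cv mu phi -> L2Fn mu isC phi0 ->
  is_cont_frame mu isC phi0 -> (0 < n)%N ->
  forall e, 0 < e -> exists t, 0 < t < e /\ is_cont_frame mu isC (interp phi phi0 t).
Proof.
move=> h1 hL0 fr0 n0 e e0; have h0 := L2Fn_L2cv hL0.
have [c c0 hc] := frame_gram_coercive hL0 fr0.
have sB : (gram mu phi phi0 + gram mu phi0 phi)^T = gram mu phi phi0 + gram mu phi0 phi.
  by rewrite linearD /= !gram_tr addrC.
have psd s u : 0 <= qf (pencil (gram mu phi phi) (gram mu phi phi0 + gram mu phi0 phi)
    (gram mu phi0 phi0) s) u.
  by rewrite -gram_interp //; exact: gram_psd (L2cv_interp s h1 h0) u.
have [t [te [a a0 ha]]] := pencil_coercive_near0 (ltn_addr n n0) (gram_tr mu phi phi)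
  sB (gram_tr mu phi0 phi0) psd c0 hc e0.
exists t; split => //; apply: (frame_of_gram_coercive _ (L2cv_interp t h1 h0) a0).
by move=> u; rewrite gram_interp //; exact: ha.
Qed.

Lemma cint_comb (A : set T) f g (a b : R) : measurable A ->
  intR mu (fun x => Re (f x)) -> intR mu (fun x => Im (f x)) ->
  intR mu (fun x => Re (g x)) -> intR mu (fun x => Im (g x)) ->
  cint mu A (fun x => (a%:C)%C * f x + (b%:C)%C * g x) =
  (a%:C)%C * cint mu A f + (b%:C)%C * cint mu A g.
Proof.
move=> mA rf if_ rg ig; have sub F := @integrableS _ _ _ mu _ _ F measurableT mA (subsetT A).
have Re_cint F : Re (cint mu A F) = Rintegral mu A (fun x => Re (F x)) by [].
have Im_cint F : Im (cint mu A F) = Rintegral mu A (fun x => Im (F x)) by [].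
apply: cx_eq; rewrite ?(ReD, ImD, ReM, ImM, ReC, ImC, Re_cint, Im_cint) !mul0r.
- under eq_Rintegral do rewrite ReD !ReM !ReC !ImC !mul0r !subr0.
  by rewrite RintegralD ?RintegralZl ?subr0 //; apply: sub; try apply: intRZ.
- under eq_Rintegral do rewrite ImD !ImM !ReC !ImC !mul0r !addr0.
  by rewrite RintegralD ?RintegralZl ?addr0 //; apply: sub; try apply: intRZ.
Qed.

Lemma Wmap_interp l (Xs : 'I_l -> set T) h (D : 'I_l -> 'I_n -> R[i]) phi phi0 t :
  (forall j, measurable (Xs j)) -> L2c mu h -> L2cv mu phi -> L2cv mu phi0 ->
  Wmap mu Xs h phi = D -> Wmap mu Xs h phi0 = D ->
  Wmap mu Xs h (interp phi phi0 t) = D.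
Proof.
move=> mX hh h1 h0 W1 W0; apply: funext => j; apply: funext => i.
have intRe g : L2c mu g -> intR mu (fun x => Re (h x * g x)).
  by move=> hg; under eq_fun do rewrite Re_rdot; apply: intR_rdot => //; exact: L2cJ.
have intIm g : L2c mu g -> intR mu (fun x => Im (h x * g x)).
  move=> hg; under eq_fun do rewrite Im_rdot.
  by apply: intR_rdot => //; apply: L2c_imul; exact: L2cJ.
have distr x : h x * interp phi phi0 t x i =
    ((1 - t)%:C)%C * (h x * phi x i) + (t%:C)%C * (h x * phi0 x i).
  by rewrite /interp; cx_ring.
rewrite /Wmap (eq_fun distr) cint_comb //; try by [apply: intRe | apply: intIm].
have -> : cint mu (Xs j) (fun x => h x * phi x i) = D j i by rewrite -W1.
have -> : cint mu (Xs j) (fun x => h x * phi0 x i) = D j i by rewrite -W0.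
by cx_ring.
Qed.

Lemma dist_interp phi phi0 t : L2cv mu phi -> L2cv mu phi0 ->
  L2dist_sq mu phi (interp phi phi0 t) =
  (t ^+ 2 * Rintegral mu setT (fun x => vsq (fun i => phi x i - phi0 x i)))%:E.
Proof.
move=> h1 h0; rewrite /L2dist_sq.
have scale x : vsq (fun i => phi x i - interp phi phi0 t x i) =
    t ^+ 2 * vsq (fun i => phi x i - phi0 x i).
  rewrite /vsq mulr_sumr; apply: eq_bigr => i _.
  by rewrite /csq /interp !(ReB, ImB, ReD, ImD, ReM, ImM, ReC, ImC); ring.
under eq_integral => x _ do rewrite scale.
have iV : intR mu (fun x => vsq (fun i => phi x i - phi0 x i)).
  by apply: intR_sum => i; exact: (L2cB (h1 i) (h0 i)).2.
by rewrite (intR_integral (intRZ (t ^+ 2) iV)) RintegralZl.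
Qed.

Lemma dist_interp_lt phi phi0 t eps : L2cv mu phi -> L2cv mu phi0 ->
  0 < t -> t < eps / (Rintegral mu setT
    (fun x => vsq (fun i => phi x i - phi0 x i)) + 1) ->
  (L2dist_sq mu phi (interp phi phi0 t) < (eps ^+ 2)%:E)%E.
Proof.
set K := Rintegral _ _ _ => h1 h0 t0 tK; rewrite dist_interp // -/K lte_fin.
have K0 : 0 <= K.
  by apply: Rintegral_ge0 => x _; apply: sumr_ge0 => i _; exact: csq_ge0.
have htK : t * (K + 1) < eps by rewrite -ltr_pdivlMr // ltr_wpDl.
have s0 : 0 <= t * (K + 1) by rewrite mulr_ge0 ?addr_ge0 // ltW.
have : (t * (K + 1)) ^+ 2 < eps ^+ 2 by rewrite !expr2; nra.
apply: le_lt_trans; rewrite exprMn ler_wpM2l ?sqr_ge0 // expr2; nra.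
Qed.

End Frames.

Theorem corollary6p3 (R : realType) (d : measure_display) (T : measurableType d)
  (mu : {measure set T -> \bar R}) (isC : bool) (n l : nat)
  (Xs : 'I_l -> set T) (h : T -> R[i]) (D : 'I_l -> 'I_n -> R[i]) :
  (0 < n)%N -> (0 < l)%N ->
  (forall j, measurable (Xs j)) ->
  (forall j k, j != k -> Xs j `&` Xs k = set0) ->
  \bigcup_(j in [set: 'I_l]) Xs j = [set: T] ->
  L2F mu isC h ->
  (forall j, Fvec isC (D j)) ->
  (exists Phi0, L2Fn mu isC Phi0 /\ is_cont_frame mu isC Phi0 /\
                Wmap mu Xs h Phi0 = D) ->
  forall Phi, L2Fn mu isC Phi -> Wmap mu Xs h Phi = D ->
  forall eps : R, 0 < eps ->
  exists Psi, L2Fn mu isC Psi /\ is_cont_frame mu isC Psi /\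
              Wmap mu Xs h Psi = D /\
              (L2dist_sq mu Phi Psi < (eps ^+ 2)%:E)%E.
Proof.
move=> n0 _ mX _ _ hh _ [Phi0 [hL0 [fr0 W0]]] Phi hL W1 eps eps0.
have [h1 h0] := (L2Fn_L2cv hL, L2Fn_L2cv hL0).
set K := Rintegral mu setT (fun x => vsq (fun i => Phi x i - Phi0 x i)).
have K0 : 0 <= K.
  by apply: Rintegral_ge0 => x _; apply: sumr_ge0 => i _; exact: csq_ge0.
have [t [/andP [t0 tK] frame]] :=
  interp_frame_near0 h1 hL0 fr0 n0 (divr_gt0 eps0 (ltr_wpDl K0 ltr01)).
exists (interp Phi Phi0 t); split; first exact: L2Fn_interp.
split; first exact: frame.
split; first exact: Wmap_interp (L2F_L2c hh) h1 h0 W1 W0.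
exact: dist_interp_lt.
Qed.
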